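(* Let $(X,m)$ be a $\sigma$-finite measure space and let $Q$ with domain $\mathcal D$ and $Q^\#$ with domain $\mathcal D^\#$ be Dirichlet forms on $L^2(X,m)$ such that $\mathcal D\subseteq\mathcal D^\#$ and $Q^\#=Q$ on $\mathcal D\times\mathcal D$. Then the following are equivalent: (i) $\mathcal D=\mathcal D^\#$; (ii) there is no nontrivial $u\in D(L')$ with $L'u=-u$.
   Context: A Dirichlet form on $L^2(X,m)$ is a densely defined, nonnegative, closed, symmetric bilinear form satisfying the contraction property. $\langle\cdot,\cdot\rangle$ denotes the $L^2(X,m)$ inner product. The operator $L'$ has domain $D(L')=\{u\in\mathcal D^\#\mid \exists w\in L^2(X,m)\text{ with } Q^\#(u,v)=\langle w,v\rangle\text{ for all }v\in\mathcal D\}$ and acts by $L'u=w$. *)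

From HB Require Import structures.
From mathcomp Require Import all_boot all_order all_algebra.
From mathcomp Require Import all_classical all_reals all_analysis.
Set Implicit Arguments. Unset Strict Implicit. Unset Printing Implicit Defensive.
Import Order.TTheory GRing.Theory Num.Theory.
Local Open Scope classical_set_scope.
Local Open Scope ring_scope.

(* Elements of L^2(X,m) are represented by real functions f with
   f \in Lfun mu 2 (measurable, finite L^2 norm); equality in L^2 is
   a.e. equality.  A (possibly unbounded) form on L^2 is given by a domain
   D : set (T -> R) and a map Q : (T -> R) -> (T -> R) -> R, required to be
   compatible with a.e. equality. *)

Section DirichletForms.
Context d (T : measurableType d) (R : realType).
Variable mu : {measure set T -> \bar R}.

Definition L2 (f : T -> R) : Prop := f \in Lfun mu 2%E.

Definition ip (f g : T -> R) : R := Rintegral mu setT (fun x => f x * g x).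

Definition nsq (f : T -> R) : R := ip f f.

Definition diff (f g : T -> R) : T -> R := fun x => f x - g x.

Definition unit_contraction (u : T -> R) : T -> R :=
  fun x => Num.min (Num.max (u x) 0) 1.

Definition is_Dirichlet_form (D : set (T -> R)) (Q : (T -> R) -> (T -> R) -> R)
  : Prop :=
  [/\
    [/\ (* D is a subset of L^2, saturated under a.e. equality, and Q only
       depends on a.e. classes (i.e. this is a form on L^2 classes) *)
    (forall u, D u -> L2 u),
    (forall u v, D u -> L2 v -> u = v %[ae mu] -> D v)
    & (forall u u' v v', D u -> D u' -> D v -> D v' ->
        u = u' %[ae mu] -> v = v' %[ae mu] -> Q u v = Q u' v')],
    D (fun=> 0) /\
    (forall (a : R) u v, D u -> D v -> D (fun x => a * u x + v x)),
    (forall f, L2 f -> forall eps : R, 0 < eps ->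
        exists2 g, D g & nsq (diff f g) < eps) &
    [/\
      (forall u v, D u -> D v -> Q u v = Q v u),
      (forall (a : R) u v w, D u -> D v -> D w ->
          Q (fun x => a * u x + v x) w = a * Q u w + Q v w),
      (forall u, D u -> 0 <= Q u u),
      (forall u : nat -> T -> R, (forall n, D (u n)) ->
        (forall eps : R, 0 < eps -> exists N, forall n m, (N <= n)%N -> (N <= m)%N ->
            Q (diff (u n) (u m)) (diff (u n) (u m)) + nsq (diff (u n) (u m)) < eps) ->
        exists2 v, D v &
          (forall eps : R, 0 < eps -> exists N, forall n, (N <= n)%N ->
            Q (diff (u n) v) (diff (u n) v) + nsq (diff (u n) v) < eps)) &
      (forall u, D u -> D (unit_contraction u) /\
          Q (unit_contraction u) (unit_contraction u) <= Q u u)]].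

(* The operator L' : graph relation  "u \in D(L') and L'u = w", i.e.
   u \in D^#, w \in L^2 and Q^#(u,v) = <w,v> for all v \in D. *)
Definition Lprime (D Dsharp : set (T -> R)) (Qsharp : (T -> R) -> (T -> R) -> R)
    (u w : T -> R) : Prop :=
  [/\ Dsharp u, L2 w & forall v, D v -> Qsharp u v = ip w v].

End DirichletForms.

From Pilot Require Import Defs.
From HB Require Import structures.
From mathcomp Require Import all_boot all_order all_algebra.
From mathcomp Require Import all_classical all_reals all_analysis.
From mathcomp Require Import ring lra.
Set Implicit Arguments. Unset Strict Implicit. Unset Printing Implicit Defensive.
Import Order.TTheory GRing.Theory Num.Theory.
Local Open Scope classical_set_scope.
Local Open Scope ring_scope.

(* For w in D#, let v be the projection of w onto D for the energy inner
   product Q# + <.,.>; D is complete for it because Q is closed and Q# = Q on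
   D.  Then u = w - v is energy-orthogonal to D, i.e. Q#(u, z) = <-u, z> for
   z in D, which says exactly that L'u = -u.  So (ii) forces u = 0 a.e., and
   w = v a.e. lies in D.  Conversely, if u in D = D# has L'u = -u, then
   Q#(u, u) = -<u, u> <= 0, so u = 0 a.e.
   The projection is built without square roots: a minimising sequence is
   Cauchy by the parallelogram law, and orthogonality follows from a
   first-order variational argument. *)

Lemma quadratic_ge0_lin_coef0 (R : realFieldType) (c e : R) :
  (forall s, 0 <= s * c + s ^+ 2 * e) -> c = 0.
Proof.
move=> hq; have k_gt0 : 0 < e ^+ 2 + 1 by rewrite ltr_wpDl ?sqr_ge0.
have := hq (- c / (e ^+ 2 + 1)).
have -> : - c / (e ^+ 2 + 1) * c + (- c / (e ^+ 2 + 1)) ^+ 2 * e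
    = - c ^+ 2 * ((e - 1 / 2) ^+ 2 + 3 / 4) / (e ^+ 2 + 1) ^+ 2.
  by field; rewrite gt_eqF.
rewrite pmulr_lge0 ?invr_gt0 ?exprn_gt0 // mulNr oppr_ge0 pmulr_lle0; last first.
  by apply: ltr_wpDl; [exact: sqr_ge0 | lra].
by move=> c2_le0; apply/eqP; rewrite -sqrf_eq0 eq_le c2_le0 sqr_ge0.
Qed.

Lemma invSn_eventually_lt (R : archiRealFieldType) (eps : R) : 0 < eps ->
  exists N, forall n, (N <= n)%N -> n.+1%:R^-1 < eps.
Proof.
move=> eps_gt0; exists (Num.truncn eps^-1) => n le_Nn.
have lt_inv_n : eps^-1 < n.+1%:R.
  by apply: (lt_le_trans (truncnS_gt _)); rewrite ler_nat ltnS.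
by rewrite -[eps]invrK ltf_pV2 // ?posrE ?invr_gt0.
Qed.

Section LinearSets.
Variables (T : Type) (R : pzRingType).

Definition lin_closed (P : set (T -> R)) : Prop :=
  P (fun=> 0) /\ forall a u v, P u -> P v -> P (fun x => a * u x + v x).

Variable P : set (T -> R).
Hypothesis P_lin : lin_closed P.

Lemma lin_closedZ a u : P u -> P (fun x => a * u x).
Proof.
case: P_lin => P0 PD Pu.
have -> : (fun x => a * u x) = (fun x => a * u x + 0) by apply/funext => x; rewrite addr0.
exact: PD.
Qed.

Lemma lin_closed_comb2 a b u v : P u -> P v -> P (fun x => a * u x + b * v x).
Proof. by move=> Pu Pv; apply: P_lin.2 => //; exact: lin_closedZ. Qed.

Lemma lin_closedB u v : P u -> P v -> P (fun x => u x - v x).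
Proof.
move=> Pu Pv; have -> : (fun x => u x - v x) = (fun x => 1 * u x + (-1) * v x).
  by apply/funext => x; rewrite mul1r mulN1r.
exact: lin_closed_comb2.
Qed.

End LinearSets.

Section FormConvergence.
Variables (T : Type) (R : numDomainType) (B : (T -> R) -> (T -> R) -> R).

Definition form_cauchy (u : nat -> T -> R) : Prop :=
  forall eps, 0 < eps -> exists N, forall n m, (N <= n)%N -> (N <= m)%N ->
    B (fun x => u n x - u m x) (fun x => u n x - u m x) < eps.

Definition form_cvg (u : nat -> T -> R) (v : T -> R) : Prop :=
  forall eps, 0 < eps -> exists N, forall n, (N <= n)%N ->
    B (fun x => u n x - v x) (fun x => u n x - v x) < eps.

End FormConvergence.

Section SymmetricForms.
Variables (T : Type) (R : realType) (S : set (T -> R)).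
Variable B : (T -> R) -> (T -> R) -> R.
Hypothesis S_lin : lin_closed S.
Hypothesis BC : forall u v, S u -> S v -> B u v = B v u.
Hypothesis BDl : forall a u v w, S u -> S v -> S w ->
  B (fun x => a * u x + v x) w = a * B u w + B v w.
Hypothesis B_ge0 : forall u, S u -> 0 <= B u u.

Lemma form0l w : S w -> B (fun=> 0) w = 0.
Proof.
move=> Sw; have S0 := S_lin.1.
have := BDl 1 S0 S0 Sw.
have -> : (fun x => 1 * 0 + 0) = (fun=> 0) :> (T -> R).
  by apply/funext => x; rewrite mulr0 addr0.
by move=> /eqP; rewrite mul1r -subr_eq subrr eq_sym => /eqP.
Qed.

Lemma formZl a u w : S u -> S w -> B (fun x => a * u x) w = a * B u w.
Proof.
move=> Su Sw; have S0 := S_lin.1.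
have := BDl a Su S0 Sw; rewrite form0l // addr0 => <-.
by congr B; apply/funext => x; rewrite addr0.
Qed.

Lemma formZr a u w : S u -> S w -> B w (fun x => a * u x) = a * B w u.
Proof.
by move=> Su Sw; rewrite BC ?formZl ?(BC Su) //; exact: lin_closedZ.
Qed.

Lemma formBl u v w : S u -> S v -> S w -> B (fun x => u x - v x) w = B u w - B v w.
Proof.
move=> Su Sv Sw; rewrite (_ : (fun x => u x - v x) = (fun x => -1 * v x + u x)).
  by rewrite BDl // mulN1r addrC.
by apply/funext => x; rewrite mulN1r addrC.
Qed.

Lemma formDr a u v w : S u -> S v -> S w ->
  B w (fun x => a * u x + v x) = a * B w u + B w v.
Proof.
move=> Su Sv Sw; have Sc : S (fun x => a * u x + v x) by exact: S_lin.2.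
by rewrite BC // BDl // (BC Su) // (BC Sv).
Qed.

Lemma form_comb2 a b u v : S u -> S v ->
  B (fun x => a * u x + b * v x) (fun x => a * u x + b * v x)
  = a ^+ 2 * B u u + 2 * a * b * B u v + b ^+ 2 * B v v.
Proof.
move=> Su Sv; have Sbv := lin_closedZ S_lin b Sv.
have Sc := lin_closed_comb2 S_lin a b Su Sv.
rewrite BDl // (formZl _ Sv Sc) !formDr // (formZr _ Sv Su) (formZr _ Sv Sv) (BC Sv Su).
ring.
Qed.

Lemma form_parallelogram u v : S u -> S v ->
  B (fun x => u x - v x) (fun x => u x - v x)
  + 4 * B (fun x => (u x + v x) / 2) (fun x => (u x + v x) / 2)
  = 2 * B u u + 2 * B v v.
Proof.
move=> Su Sv.
have -> : (fun x => u x - v x) = (fun x => 1 * u x + (-1) * v x).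
  by apply/funext => x; ring.
have -> : (fun x => (u x + v x) / 2) = (fun x => 2^-1 * u x + 2^-1 * v x).
  by apply/funext => x; ring.
by rewrite !form_comb2 //; field.
Qed.

Lemma form_approx_min_orthogonal u z : S u -> S z ->
  (forall eta, 0 < eta -> exists p, [/\ S p, B p p < eta &
     forall s, B (fun x => u x - p x) (fun x => u x - p x)
               < B (fun x => u x - p x + s * z x) (fun x => u x - p x + s * z x)
                 + eta]) ->
  B u z = 0.
Proof.
move=> Su Sz approx; apply: (@quadratic_ge0_lin_coef0 _ _ (B z z)) => s.
apply/ler_addgt0Pr => eta eta_gt0.
have [p [Sp Bp_lt min_p]] := approx eta eta_gt0.
set q := fun x => u x - p x.
have Sq : S q by exact: lin_closedB.
have expand_q : B (fun x => q x + s * z x) (fun x => q x + s * z x)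
    = B q q + 2 * s * (B u z - B p z) + s ^+ 2 * B z z.
  rewrite (_ : (fun x => q x + s * z x) = (fun x => 1 * q x + s * z x)).
    by rewrite form_comb2 // [B q z]formBl //; ring.
  by apply/funext => x; rewrite mul1r.
have := B_ge0 (lin_closed_comb2 S_lin 1 s Sp Sz).
rewrite form_comb2 //; have := min_p s; rewrite -/q expand_q.
nra.
Qed.

End SymmetricForms.

Section Projection.
Variables (T : Type) (R : realType) (S D : set (T -> R)).
Variable B : (T -> R) -> (T -> R) -> R.
Hypotheses (S_lin : lin_closed S) (D_lin : lin_closed D) (D_sub : D `<=` S).
Hypothesis BC : forall u v, S u -> S v -> B u v = B v u.
Hypothesis BDl : forall a u v w, S u -> S v -> S w ->
  B (fun x => a * u x + v x) w = a * B u w + B v w.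
Hypothesis B_ge0 : forall u, S u -> 0 <= B u u.
Hypothesis D_complete : forall u : nat -> T -> R, (forall n, D (u n)) ->
  form_cauchy B u -> exists2 v, D v & form_cvg B u v.

Variable w : T -> R.
Hypothesis Sw : S w.

Let dist (v : T -> R) := B (fun x => w x - v x) (fun x => w x - v x).
Let dist_inf := inf (dist @` D).

Lemma dist_lbound : has_lbound (dist @` D).
Proof.
by exists 0 => _ [v Dv <-]; apply: B_ge0; apply: lin_closedB Sw (D_sub Dv).
Qed.

Lemma dist_inf_le v : D v -> dist_inf <= dist v.
Proof. by move=> Dv; apply: (ge_inf dist_lbound); exists v. Qed.

Lemma minimizing_seq_exists : exists vs : nat -> T -> R,
  forall n, D (vs n) /\ dist (vs n) < dist_inf + n.+1%:R^-1.
Proof.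
suff /choice[vs vsP] : forall n, exists v, D v /\ dist v < dist_inf + n.+1%:R^-1.
  by exists vs.
move=> n.
have [_ [v Dv <-] lt_v] : exists2 r, (dist @` D) r & r < dist_inf + n.+1%:R^-1.
  apply: inf_adherent; first by rewrite invr_gt0 ltr0Sn.
  split; first by exists (dist (fun=> 0)), (fun=> 0) => //; exact: D_lin.1.
  exact: dist_lbound.
by exists v.
Qed.

Lemma minimizing_seq_cauchy (vs : nat -> T -> R) :
  (forall n, D (vs n) /\ dist (vs n) < dist_inf + n.+1%:R^-1) -> form_cauchy B vs.
Proof.
move=> vsP eps eps_gt0.
have [N N_P] := @invSn_eventually_lt R (eps / 4) (divr_gt0 eps_gt0 (ltr0n _ 4)).
exists N => n m le_Nn le_Nm.
have [Dn lt_n] := vsP n; have [Dm lt_m] := vsP m.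
have [Sn Sm] := (D_sub Dn, D_sub Dm).
have Dmid : D (fun x => 2^-1 * vs m x + 2^-1 * vs n x) by exact: lin_closed_comb2.
have := form_parallelogram S_lin BC BDl (lin_closedB S_lin Sw Sm) (lin_closedB S_lin Sw Sn).
rewrite (_ : (fun x => w x - vs m x - (w x - vs n x)) = (fun x => vs n x - vs m x)); last first.
  by apply/funext => x; ring.
rewrite (_ : (fun x => (w x - vs m x + (w x - vs n x)) / 2)
           = (fun x => w x - (2^-1 * vs m x + 2^-1 * vs n x))); last first.
  by apply/funext => x; field.
have := dist_inf_le Dmid; have := N_P n le_Nn; have := N_P m le_Nm.
move: lt_n lt_m; rewrite /dist.
(* [lra] only accepts [n.+1%:R^-1] once it is generalised to a variable. *)
move: n.+1%:R^-1 m.+1%:R^-1 => p q; lra.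
Qed.

Lemma projection_orthogonal :
  exists2 v, D v & forall z, D z -> B (fun x => w x - v x) z = 0.
Proof.
have [vs vsP] := minimizing_seq_exists.
have [v Dv vs_cvg] := D_complete (fun n => (vsP n).1) (minimizing_seq_cauchy vsP).
exists v => // z Dz; have [Sv Sz] := (D_sub Dv, D_sub Dz).
apply: (form_approx_min_orthogonal S_lin BC BDl B_ge0 (lin_closedB S_lin Sw Sv) Sz).
move=> eta eta_gt0.
have [N1 N1P] := vs_cvg eta eta_gt0; have [N2 N2P] := invSn_eventually_lt eta_gt0.
pose n := maxn N1 N2; have [Dn lt_n] := vsP n.
exists (fun x => vs n x - v x); split.
- exact: lin_closedB (D_sub Dn) Sv.
- exact: N1P (leq_maxl _ _).
move=> s /=.
have D_step : D (fun x => - s * z x + vs n x) by exact: D_lin.2.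
have := dist_inf_le D_step; have := N2P n (leq_maxr _ _); move: lt_n; rewrite /dist.
rewrite (_ : (fun x => w x - v x - (vs n x - v x)) = (fun x => w x - vs n x)); last first.
  by apply/funext => x; ring.
rewrite (_ : (fun x => w x - v x - (vs n x - v x) + s * z x)
           = (fun x => w x - (- s * z x + vs n x))); last first.
  by apply/funext => x; ring.
move: n.+1%:R^-1 => p; lra.
Qed.

End Projection.

Section InnerProduct.
Context d (T : measurableType d) (R : realType).
Variable mu : {measure set T -> \bar R}.

Lemma L2_mul_integrable (f g : T -> R) : L2 mu f -> L2 mu g ->
  mu.-integrable setT (EFin \o (fun x => f x * g x)).
Proof. by move=> L2f L2g; apply/Lfun1_integrable; exact: Lfun2_mul_Lfun1. Qed.

Lemma ipC (f g : T -> R) : ip mu f g = ip mu g f.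
Proof. by apply: eq_Rintegral => x _; rewrite mulrC. Qed.

Lemma ipZl (a : R) (u w : T -> R) : L2 mu u -> L2 mu w ->
  ip mu (fun x => a * u x) w = a * ip mu u w.
Proof.
move=> L2u L2w; rewrite -RintegralZl //; last exact: L2_mul_integrable.
by apply: eq_Rintegral => x _; rewrite mulrA.
Qed.

Lemma ipDl (a : R) (u v w : T -> R) : L2 mu u -> L2 mu v -> L2 mu w ->
  ip mu (fun x => a * u x + v x) w = a * ip mu u w + ip mu v w.
Proof.
move=> L2u L2v L2w; rewrite -ipZl // /ip -RintegralD //; last first.
- exact: L2_mul_integrable.
- apply: eq_integrable (integrableZl measurableT a (L2_mul_integrable L2u L2w)) => // x _.
  by rewrite /= -EFinM mulrA.
by apply: eq_Rintegral => x _; rewrite mulrDl.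
Qed.

Lemma ipNl (u w : T -> R) : L2 mu u -> L2 mu w ->
  ip mu (fun x => - u x) w = - ip mu u w.
Proof.
move=> L2u L2w; rewrite -mulN1r -ipZl //.
by apply: eq_Rintegral => x _; rewrite mulN1r.
Qed.

Lemma nsq_ge0 (f : T -> R) : 0 <= nsq mu f.
Proof. by apply: Rintegral_ge0 => x _; rewrite -expr2 sqr_ge0. Qed.

Lemma nsq_eq0 (f : T -> R) : L2 mu f -> nsq mu f = 0 -> f = (fun=> 0) %[ae mu].
Proof.
move=> L2f nsq0.
have ff_int := L2_mul_integrable L2f L2f.
have int_abs0 : (\int[mu]_x `|(f x * f x)%:E|)%E = 0%E.
  rewrite -[RHS](_ : (nsq mu f)%:E = 0%E); last by rewrite nsq0.
  rewrite /nsq /ip /Rintegral fineK; last exact: integrable_fin_num ff_int.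
  by apply: eq_integral => x _ /=; rewrite ger0_norm // -expr2 sqr_ge0.
have [ff_mfun _] := integrableP _ _ _ ff_int.
apply: filterS ((ae_eq_integral_abs mu measurableT ff_mfun).1 int_abs0) => x ffx0 _.
by move: (ffx0 I) => /= /eqP; rewrite eqe mulf_eq0 orbb => /eqP.
Qed.

End InnerProduct.

Section DirichletPair.
Context d (T : measurableType d) (R : realType).
Variable mu : {measure set T -> \bar R}.
Variables (D Dsharp : set (T -> R)) (Q Qsharp : (T -> R) -> (T -> R) -> R).
Hypotheses (hQ : is_Dirichlet_form mu D Q) (hQsharp : is_Dirichlet_form mu Dsharp Qsharp).
Hypothesis hsub : D `<=` Dsharp.
Hypothesis hagree : forall u v, D u -> D v -> Qsharp u v = Q u v.

Let energy (u v : T -> R) := Qsharp u v + ip mu u v.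

Lemma Lprime_opp_ae0 u : D u -> Lprime mu D Dsharp Qsharp u (fun x => - u x) ->
  u = (fun=> 0) %[ae mu].
Proof.
case: hQsharp => [[L2_Dsharp _ _] _ _ [_ _ Qsharp_ge0 _ _]] Du [Dsharp_u _ Lu].
apply: nsq_eq0; first exact: L2_Dsharp.
have := Lu u Du; rewrite ipNl; try exact: L2_Dsharp.
have := Qsharp_ge0 u Dsharp_u; have := nsq_ge0 mu u; rewrite /nsq; lra.
Qed.

Lemma energy_complete (u : nat -> T -> R) : (forall n, D (u n)) ->
  form_cauchy energy u -> exists2 v, D v & form_cvg energy u v.
Proof.
case: hQ => [_ D_lin _ [_ _ _ Q_closed _]] Du u_cauchy.
have energy_Q v v' : D v -> D v' -> energy (fun x => v x - v' x) (fun x => v x - v' x)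
    = Q (Defs.diff v v') (Defs.diff v v') + nsq mu (Defs.diff v v').
  by move=> Dv Dv'; rewrite /energy hagree //; exact: lin_closedB.
have [v Dv u_cvg] : exists2 v, D v & forall eps : R, 0 < eps -> exists N, forall n,
    (N <= n)%N -> Q (Defs.diff (u n) v) (Defs.diff (u n) v) + nsq mu (Defs.diff (u n) v) < eps.
  apply: Q_closed => // eps eps_gt0; have [N NP] := u_cauchy eps eps_gt0.
  by exists N => n m le_Nn le_Nm; rewrite -energy_Q //; exact: NP.
exists v => // eps eps_gt0; have [N NP] := u_cvg eps eps_gt0.
by exists N => n le_Nn; rewrite energy_Q //; exact: NP.
Qed.

Lemma Lprime_projection w : Dsharp w -> exists2 v, D v &
  Lprime mu D Dsharp Qsharp (fun x => w x - v x) (fun x => - (w x - v x)).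
Proof.
case: hQ => [_ D_lin _ _]; case: hQsharp => [[L2_Dsharp _ _] Dsharp_lin _ [QC QDl Q_ge0 _ _]].
move=> Dsharp_w; have [v Dv v_orth] : exists2 v, D v &
    forall z, D z -> energy (fun x => w x - v x) z = 0.
  apply: (projection_orthogonal Dsharp_lin D_lin hsub) => //.
  - by move=> u u' Su Su'; rewrite /energy QC // ipC.
  - move=> a u u' u'' Su Su' Su''; rewrite /energy QDl // ipDl; try exact: L2_Dsharp.
    ring.
  - by move=> u Su; apply: addr_ge0; [exact: Q_ge0 | exact: nsq_ge0].
  - exact: energy_complete.
have Dsharp_wv : Dsharp (fun x => w x - v x) by apply: lin_closedB => //; exact: hsub.
exists v => //; split => //.
- apply: L2_Dsharp; rewrite (_ : (fun x => _) = (fun x => -1 * (w x - v x))).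
    exact: lin_closedZ.
  by apply/funext => x; rewrite mulN1r.
- move=> z Dz; have := v_orth z Dz; rewrite /energy ipNl; try exact: L2_Dsharp.
  + lra.
  + exact: L2_Dsharp (hsub Dz).
Qed.

End DirichletPair.

Theorem mainTheorem2 (d : measure_display) (T : measurableType d) (R : realType)
    (mu : {measure set T -> \bar R}) (mu_sfin : sigma_finite setT mu)
    (D Dsharp : set (T -> R)) (Q Qsharp : (T -> R) -> (T -> R) -> R)
    (hQ : is_Dirichlet_form mu D Q) (hQsharp : is_Dirichlet_form mu Dsharp Qsharp)
    (hsub : D `<=` Dsharp)
    (hagree : forall u v, D u -> D v -> Qsharp u v = Q u v) :
  D = Dsharp <->
  ~ (exists u : T -> R,
       ~ (u = (fun=> 0) %[ae mu]) /\ Lprime mu D Dsharp Qsharp u (fun x => - u x)).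
Proof.
split.
- move=> eqD [u [u_nz Lu]]; apply: u_nz.
  have Du : D u by rewrite eqD; case: Lu.
  exact (Lprime_opp_ae0 hQsharp Du Lu).
- move=> no_eigen; apply/seteqP; split => // w Dsharp_w.
  have [v Dv Lwv] := Lprime_projection hQ hQsharp hsub hagree Dsharp_w.
  have wv_ae0 : (fun x => w x - v x) = (fun=> 0) %[ae mu].
    by apply: contrapT => wv_nz; apply: no_eigen; exists (fun x => w x - v x).
  case: hQ => [[_ D_ae _] _ _ _]; case: hQsharp => [[L2_Dsharp _ _] _ _ _].
  apply: (D_ae v w Dv (L2_Dsharp w Dsharp_w)); apply: filterS wv_ae0 => x wvx0 _.
  by apply/eqP; rewrite eq_sym -subr_eq0 wvx0.
Qed.
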